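(* Let $\mathcal{C}$ be a deflation-exact category and $\mathcal{A}\subseteq\mathcal{C}$ an admissibly deflation-percolating subcategory. Let $a\colon U\rightarrowtail V$ be an $\mathcal{A}^{-1}$-inflation and $b\colon V\twoheadrightarrow W$ an $\mathcal{A}^{-1}$-deflation. Then $b\circ a$ is an admissible morphism whose kernel and cokernel lie in $\mathcal{A}$.
   Context: A conflation category is an additive category with a class of kernel-cokernel pairs (closed under isomorphisms) called conflations; first map an inflation, second a deflation. A deflation-exact category is a conflation category satisfying: (R0) $1_0$ is a deflation; (R1) composites of deflations are deflations; (R2) pullbacks of deflations along arbitrary morphisms exist and are deflations. A morphism is admissible if it factors as a deflation followed by an inflation. A non-empty full subcategory $\mathcal{A}$ is admissibly deflation-percolating if: (A1) for every conflation $A'\rightarrowtail A\twoheadrightarrow A''$, $A\in\mathcal{A}$ iff $A',A''\in\mathcal{A}$; (A2) every morphism $C\to A$ with $A\in\mathcal{A}$ factors as a deflation $C\twoheadrightarrow A'$ followed by an inflation $A'\rightarrowtail A$ with $A'\in\mathcal{A}$; (A3) if $a\colon C\rightarrowtail D$ is an inflation and $b\colon C\twoheadrightarrow A$ a deflation with $A\in\mathcal{A}$, the pushout of $a$ along $b$ exists and yields a deflation $D\twoheadrightarrow P$ and an inflation $A\rightarrowtail P$. An $\mathcal{A}^{-1}$-inflation is an inflation with cokernel in $\mathcal{A}$; an $\mathcal{A}^{-1}$-deflation is a deflation with kernel in $\mathcal{A}$. *)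

Set Implicit Arguments.
Unset Strict Implicit.

Record AddCat := {
  Ob : Type;
  Hom : Ob -> Ob -> Type;
  comp : forall A B C : Ob, Hom B C -> Hom A B -> Hom A C;
  idm : forall A : Ob, Hom A A;
  hadd : forall A B : Ob, Hom A B -> Hom A B -> Hom A B;
  hzero : forall A B : Ob, Hom A B;
  hopp : forall A B : Ob, Hom A B -> Hom A B;
  comp_assoc : forall A B C D (h : Hom C D) (g : Hom B C) (f : Hom A B),
      comp h (comp g f) = comp (comp h g) f;
  comp_id_l : forall A B (f : Hom A B), comp (idm B) f = f;
  comp_id_r : forall A B (f : Hom A B), comp f (idm A) = f;
  hadd_assoc : forall A B (f g h : Hom A B), hadd f (hadd g h) = hadd (hadd f g) h;
  hadd_comm : forall A B (f g : Hom A B), hadd f g = hadd g f;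
  hadd_0 : forall A B (f : Hom A B), hadd f (hzero A B) = f;
  hadd_opp : forall A B (f : Hom A B), hadd f (hopp f) = hzero A B;
  comp_hadd_l : forall A B C (g : Hom B C) (f1 f2 : Hom A B),
      comp g (hadd f1 f2) = hadd (comp g f1) (comp g f2);
  comp_hadd_r : forall A B C (g1 g2 : Hom B C) (f : Hom A B),
      comp (hadd g1 g2) f = hadd (comp g1 f) (comp g2 f);
  zob : Ob;
  zob_terminal : forall A (f g : Hom A zob), f = g;
  zob_initial : forall A (f g : Hom zob A), f = g;
  biproducts : forall A B : Ob, exists (P : Ob) (i1 : Hom A P) (i2 : Hom B P)
      (p1 : Hom P A) (p2 : Hom P B),
      comp p1 i1 = idm A /\ comp p2 i2 = idm B /\
      comp p1 i2 = hzero B A /\ comp p2 i1 = hzero A B /\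
      hadd (comp i1 p1) (comp i2 p2) = idm P
}.

Arguments comp {a A B C} _ _.
Arguments idm {a} A.
Arguments hzero {a} A B.
Arguments zob {a}.
Arguments Hom : clear implicits.
Arguments Ob : clear implicits.

Section Basic.
Variable C : AddCat.

Definition is_iso (A B : Ob C) (f : Hom C A B) : Prop :=
  exists g : Hom C B A, comp g f = idm A /\ comp f g = idm B.

Definition is_kernel (K A B : Ob C) (k : Hom C K A) (f : Hom C A B) : Prop :=
  comp f k = hzero K B /\
  forall X (x : Hom C X A), comp f x = hzero X B ->
    exists! y : Hom C X K, comp k y = x.

Definition is_cokernel (A B Q : Ob C) (f : Hom C A B) (c : Hom C B Q) : Prop :=
  comp c f = hzero A Q /\
  forall X (x : Hom C B X), comp x f = hzero A X ->
    exists! y : Hom C Q X, comp y c = x.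

Definition kernel_cokernel_pair (A B D : Ob C) (f : Hom C A B) (g : Hom C B D) : Prop :=
  is_kernel f g /\ is_cokernel f g.

(* Pullback square:  P --p--> X
                     |q       |h
                     v        v
                     Y --g--> Z        *)
Definition is_pullback (P X Y Z : Ob C) (p : Hom C P X) (q : Hom C P Y)
    (h : Hom C X Z) (g : Hom C Y Z) : Prop :=
  comp h p = comp g q /\
  forall T (u : Hom C T X) (v : Hom C T Y), comp h u = comp g v ->
    exists! w : Hom C T P, comp p w = u /\ comp q w = v.

(* Pushout square:  X --a--> Y
                    |b       |b'
                    v        v
                    Z --a'-> P          *)
Definition is_pushout (X Y Z P : Ob C) (a : Hom C X Y) (b : Hom C X Z)
    (b' : Hom C Y P) (a' : Hom C Z P) : Prop :=
  comp b' a = comp a' b /\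
  forall T (u : Hom C Y T) (v : Hom C Z T), comp u a = comp v b ->
    exists! w : Hom C P T, comp w b' = u /\ comp w a' = v.
End Basic.

Record ConfCat := {
  ccat :> AddCat;
  Conf : forall A B D : Ob ccat, Hom ccat A B -> Hom ccat B D -> Prop;
  conf_kc : forall A B D (f : Hom ccat A B) (g : Hom ccat B D),
      Conf f g -> kernel_cokernel_pair f g;
  conf_iso : forall A B D A' B' D' (f : Hom ccat A B) (g : Hom ccat B D)
      (f' : Hom ccat A' B') (g' : Hom ccat B' D')
      (u : Hom ccat A A') (v : Hom ccat B B') (w : Hom ccat D D'),
      Conf f g -> is_iso u -> is_iso v -> is_iso w ->
      comp v f = comp f' u -> comp w g = comp g' v -> Conf f' g'
}.

Section Conflations.
Variable C : ConfCat.

Definition inflation (A B : Ob C) (f : Hom C A B) : Prop :=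
  exists (D : Ob C) (g : Hom C B D), Conf f g.

Definition deflation (B D : Ob C) (g : Hom C B D) : Prop :=
  exists (A : Ob C) (f : Hom C A B), Conf f g.

Definition admissible (A B : Ob C) (f : Hom C A B) : Prop :=
  exists (I : Ob C) (d : Hom C A I) (i : Hom C I B),
    deflation d /\ inflation i /\ f = comp i d.

Definition deflation_exact : Prop :=
  deflation (idm (@zob C)) /\
  (forall A B D (f : Hom C A B) (g : Hom C B D),
               deflation f -> deflation g -> deflation (comp g f)) /\
  (forall X Y Z (g : Hom C Y Z) (h : Hom C X Z), deflation g ->
               exists (P : Ob C) (p : Hom C P X) (q : Hom C P Y),
                 is_pullback p q h g /\ deflation p).

Section Percolating.
Variable Acl : Ob C -> Prop.

Definition admissibly_deflation_percolating : Prop :=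
  (exists A : Ob C, Acl A) /\
  (* A1 *) (forall A' A A'' (f : Hom C A' A) (g : Hom C A A''),
               Conf f g -> (Acl A <-> Acl A' /\ Acl A'')) /\
  (* A2 *) (forall (X A : Ob C) (f : Hom C X A), Acl A ->
               exists (A' : Ob C) (d : Hom C X A') (i : Hom C A' A),
                 deflation d /\ inflation i /\ Acl A' /\ f = comp i d) /\
  (* A3 *) (forall (X D A : Ob C) (a : Hom C X D) (b : Hom C X A),
               inflation a -> deflation b -> Acl A ->
               exists (P : Ob C) (b' : Hom C D P) (a' : Hom C A P),
                 is_pushout a b b' a' /\ deflation b' /\ inflation a').

Definition Ainv_inflation (U V : Ob C) (a : Hom C U V) : Prop :=
  exists (Q : Ob C) (g : Hom C V Q), Conf a g /\ Acl Q.

Definition Ainv_deflation (V W : Ob C) (b : Hom C V W) : Prop :=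
  exists (K : Ob C) (f : Hom C K V), Conf f b /\ Acl K.
End Percolating.
End Conflations.


(* Let g : V ->> Q be the cokernel of a and f : K >-> V the kernel of b, so
   that Q and K lie in A.  By (A2), g ∘ f : K -> Q factors as a deflation
   d : K ->> A' followed by an inflation i : A' >-> Q.  The kernel of b ∘ a is
   that of g ∘ f, i.e. of d, and the cokernel of b ∘ a is that of g ∘ f, i.e.
   of i; both lie in A by (A1).
   For admissibility, push f out along d (A3) to a deflation b' : V ->> P.
   The pairs (g, i) and (b, 0) induce t : P -> Q and s : P -> W.  As an
   epimorphism onto an object of A, t is a deflation; b' ∘ a corestricts to
   e : U -> ker t, a pullback of b' and hence a deflation.  Then
   b ∘ a = (s ∘ ker t) ∘ e, and s ∘ ker t is a kernel of the deflation
   coker (b ∘ a), hence an inflation. *)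

Set Implicit Arguments.
Unset Strict Implicit.

Notation "g ∘ f" := (comp g f) (at level 40, left associativity).

Section Additive.
Variable C : AddCat.

Lemma hadd_0_l (A B : Ob C) (x : Hom C A B) : hadd (hzero A B) x = x.
Proof. rewrite hadd_comm. apply hadd_0. Qed.

Lemma hadd_idem_eq0 (A B : Ob C) (x : Hom C A B) : hadd x x = x -> x = hzero A B.
Proof.
  intro Hx. rewrite <- (hadd_opp x).
  transitivity (hadd (hadd x x) (hopp x)).
  - rewrite <- hadd_assoc, hadd_opp, hadd_0. reflexivity.
  - rewrite Hx. reflexivity.
Qed.

Lemma comp_0_r (A B D : Ob C) (f : Hom C B D) : f ∘ hzero A B = hzero A D.
Proof. apply hadd_idem_eq0. rewrite <- comp_hadd_l, hadd_0. reflexivity. Qed.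

Lemma comp_0_l (A B D : Ob C) (f : Hom C A B) : hzero B D ∘ f = hzero A D.
Proof. apply hadd_idem_eq0. rewrite <- comp_hadd_r, hadd_0. reflexivity. Qed.

Lemma hopp_unique (A B : Ob C) (x y : Hom C A B) :
  hadd x y = hzero A B -> y = hopp x.
Proof.
  intro Hxy.
  rewrite <- (hadd_0 y), <- (hadd_opp x), hadd_assoc, (hadd_comm y x), Hxy.
  apply hadd_0_l.
Qed.

Lemma hopp_0 (A B : Ob C) : hopp (hzero A B) = hzero A B.
Proof. symmetry. apply hopp_unique, hadd_0. Qed.

Lemma comp_hopp_r (A B D : Ob C) (g : Hom C B D) (f : Hom C A B) :
  g ∘ hopp f = hopp (g ∘ f).
Proof. apply hopp_unique. rewrite <- comp_hadd_l, hadd_opp. apply comp_0_r. Qed.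

Lemma hsub_eq0 (A B : Ob C) (x y : Hom C A B) :
  hadd x (hopp y) = hzero A B -> x = y.
Proof.
  intro Hxy. rewrite hadd_comm in Hxy.
  assert (Hy : hadd (hopp y) y = hzero A B) by (rewrite hadd_comm; apply hadd_opp).
  rewrite (hopp_unique Hxy). symmetry. exact (hopp_unique Hy).
Qed.

Definition mono (A B : Ob C) (m : Hom C A B) : Prop :=
  forall T (x y : Hom C T A), m ∘ x = m ∘ y -> x = y.

Definition epi (A B : Ob C) (p : Hom C A B) : Prop :=
  forall T (x y : Hom C B T), x ∘ p = y ∘ p -> x = y.

Lemma mono_of_comp_eq0 (A B : Ob C) (m : Hom C A B) :
  (forall T (v : Hom C T A), m ∘ v = hzero T B -> v = hzero T A) -> mono m.
Proof.
  intros Hm T x y Exy. apply hsub_eq0, Hm.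
  rewrite comp_hadd_l, comp_hopp_r, Exy. apply hadd_opp.
Qed.

Lemma epi_comp (A B D : Ob C) (f : Hom C A B) (g : Hom C B D) :
  epi f -> epi g -> epi (g ∘ f).
Proof.
  intros Ef Eg T x y Exy. apply Eg, Ef. rewrite <- !comp_assoc. exact Exy.
Qed.

Lemma epi_of_epi_comp (A B D : Ob C) (f : Hom C A B) (g : Hom C B D) :
  epi (g ∘ f) -> epi g.
Proof. intros Egf T x y Exy. apply Egf. rewrite !comp_assoc, Exy. reflexivity. Qed.

Lemma is_iso_idm (A : Ob C) : is_iso (idm A).
Proof. exists (idm A). split; apply comp_id_l. Qed.

Lemma kernel_mono (K A B : Ob C) (k : Hom C K A) (f : Hom C A B) :
  is_kernel k f -> mono k.
Proof.
  intros [Efk Kk] T x y Exy.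
  destruct (Kk T (k ∘ x)) as [z [_ Hz]].
  - rewrite comp_assoc, Efk. apply comp_0_l.
  - rewrite <- (Hz x eq_refl). apply Hz. symmetry. exact Exy.
Qed.

Lemma cokernel_epi (A B Q : Ob C) (f : Hom C A B) (c : Hom C B Q) :
  is_cokernel f c -> epi c.
Proof.
  intros [Ecf Kc] T x y Exy.
  destruct (Kc T (x ∘ c)) as [z [_ Hz]].
  - rewrite <- comp_assoc, Ecf. apply comp_0_r.
  - rewrite <- (Hz x eq_refl). apply Hz. symmetry. exact Exy.
Qed.

Lemma kernel_unique (K K' A B : Ob C) (k : Hom C K A) (k' : Hom C K' A)
  (f : Hom C A B) :
  is_kernel k f -> is_kernel k' f -> exists u : Hom C K' K, k ∘ u = k' /\ is_iso u.
Proof.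
  intros Hk Hk'.
  destruct (proj2 Hk K' k' (proj1 Hk')) as [u [Eu _]].
  destruct (proj2 Hk' K k (proj1 Hk)) as [v [Ev _]].
  exists u. split; [exact Eu|]. exists v. split.
  - apply (kernel_mono Hk'). rewrite comp_assoc, Ev, Eu, comp_id_r. reflexivity.
  - apply (kernel_mono Hk). rewrite comp_assoc, Eu, Ev, comp_id_r. reflexivity.
Qed.

Lemma pullback_unique (P P' X Y Z : Ob C) (p : Hom C P X) (q : Hom C P Y)
  (p' : Hom C P' X) (q' : Hom C P' Y) (h : Hom C X Z) (g : Hom C Y Z) :
  is_pullback p q h g -> is_pullback p' q' h g ->
  exists phi : Hom C P' P, p ∘ phi = p' /\ is_iso phi.
Proof.
  intros [E H] [E' H'].
  destruct (H P' p' q' E') as [phi [[Fp Fq] _]].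
  destruct (H' P p q E) as [psi [[Gp Gq] _]].
  exists phi. split; [exact Fp|]. exists psi. split.
  - destruct (H' P' p' q' E') as [w [_ Hw]].
    transitivity w; [symmetry|]; apply Hw.
    + rewrite comp_assoc, Gp, Fp, comp_assoc, Gq, Fq. split; reflexivity.
    + rewrite !comp_id_r. split; reflexivity.
  - destruct (H P p q E) as [w [_ Hw]].
    transitivity w; [symmetry|]; apply Hw.
    + rewrite comp_assoc, Fp, Gp, comp_assoc, Fq, Gq. split; reflexivity.
    + rewrite !comp_id_r. split; reflexivity.
Qed.

Lemma is_kernel_postcomp_mono (K A B D : Ob C) (k : Hom C K A) (d : Hom C A B)
  (i : Hom C B D) :
  is_kernel k d -> mono i -> is_kernel k (i ∘ d).
Proof.
  intros [Edk Kd] Mi. split.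
  - rewrite <- comp_assoc, Edk. apply comp_0_r.
  - intros X x Hx. apply Kd, Mi. rewrite comp_assoc, Hx, comp_0_r. reflexivity.
Qed.

Lemma is_cokernel_precomp_epi (A B D Q : Ob C) (d : Hom C A B) (i : Hom C B D)
  (c : Hom C D Q) :
  is_cokernel i c -> epi d -> is_cokernel (i ∘ d) c.
Proof.
  intros [Eci Kc] Ed. split.
  - rewrite comp_assoc, Eci. apply comp_0_l.
  - intros X x Hx. apply Kc, Ed. rewrite <- comp_assoc, Hx, comp_0_l. reflexivity.
Qed.

Lemma is_kernel_comp (U V W K Q L : Ob C) (a : Hom C U V) (g : Hom C V Q)
  (f : Hom C K V) (b : Hom C V W) (k : Hom C L K) (kU : Hom C L U) :
  is_kernel a g -> is_kernel f b -> is_kernel k (g ∘ f) -> a ∘ kU = f ∘ k ->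
  is_kernel kU (b ∘ a).
Proof.
  intros Hag Hfb Hk EkU. split.
  - rewrite <- comp_assoc, EkU, comp_assoc, (proj1 Hfb). apply comp_0_l.
  - intros X x Hx.
    destruct (proj2 Hfb X (a ∘ x)) as [y [Ey _]].
    { rewrite comp_assoc. exact Hx. }
    destruct (proj2 Hk X y) as [z [Ez _]].
    { rewrite <- comp_assoc, Ey, comp_assoc, (proj1 Hag). apply comp_0_l. }
    exists z. split.
    + apply (kernel_mono Hag). rewrite comp_assoc, EkU, <- comp_assoc, Ez. exact Ey.
    + intros z' Ez'. apply (kernel_mono Hk), (kernel_mono Hfb).
      rewrite Ez, Ey, comp_assoc, <- EkU, <- comp_assoc, Ez'. reflexivity.
Qed.

Lemma is_cokernel_comp (U V W K Q R : Ob C) (a : Hom C U V) (g : Hom C V Q)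
  (f : Hom C K V) (b : Hom C V W) (c : Hom C Q R) (h : Hom C W R) :
  is_cokernel a g -> is_cokernel f b -> is_cokernel (g ∘ f) c -> h ∘ b = c ∘ g ->
  is_cokernel (b ∘ a) h.
Proof.
  intros Hag Hfb Hc Ehb. split.
  - rewrite comp_assoc, Ehb, <- comp_assoc, (proj1 Hag). apply comp_0_r.
  - intros X x Hx.
    destruct (proj2 Hag X (x ∘ b)) as [z [Ez _]].
    { rewrite <- comp_assoc. exact Hx. }
    destruct (proj2 Hc X z) as [w [Ew _]].
    { rewrite comp_assoc, Ez, <- comp_assoc, (proj1 Hfb). apply comp_0_r. }
    exists w. split.
    + apply (cokernel_epi Hfb). rewrite <- comp_assoc, Ehb, comp_assoc, Ew. exact Ez.
    + intros w' Ew'. apply (cokernel_epi Hc), (cokernel_epi Hag).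
      rewrite Ew, Ez, <- comp_assoc, <- Ehb, comp_assoc, Ew'. reflexivity.
Qed.

Lemma kernel_pullback (U V P Q J : Ob C) (a : Hom C U V) (b' : Hom C V P)
  (t : Hom C P Q) (j : Hom C J P) (e : Hom C U J) :
  is_kernel a (t ∘ b') -> is_kernel j t -> j ∘ e = b' ∘ a ->
  is_pullback e a j b'.
Proof.
  intros Ha Hj Eje. split; [exact Eje|].
  intros T u v Euv.
  destruct (proj2 Ha T v) as [w [Ew _]].
  { rewrite <- comp_assoc, <- Euv, comp_assoc, (proj1 Hj). apply comp_0_l. }
  exists w. split; [split; [|exact Ew]|].
  - apply (kernel_mono Hj). rewrite comp_assoc, Eje, <- comp_assoc, Ew.
    symmetry. exact Euv.
  - intros w' [_ Ew']. apply (kernel_mono Ha). rewrite Ew, Ew'. reflexivity.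
Qed.
End Additive.

Section Conflations.
Variable C : ConfCat.

Lemma conf_kernel (A B D : Ob C) (f : Hom C A B) (g : Hom C B D) :
  Conf f g -> is_kernel f g.
Proof. intro Cfg. exact (proj1 (conf_kc Cfg)). Qed.

Lemma conf_cokernel (A B D : Ob C) (f : Hom C A B) (g : Hom C B D) :
  Conf f g -> is_cokernel f g.
Proof. intro Cfg. exact (proj2 (conf_kc Cfg)). Qed.

Lemma conf_comp_eq0 (A B D : Ob C) (f : Hom C A B) (g : Hom C B D) :
  Conf f g -> g ∘ f = hzero A D.
Proof. intro Cfg. exact (proj1 (conf_kernel Cfg)). Qed.

Lemma conf_mono (A B D : Ob C) (f : Hom C A B) (g : Hom C B D) :
  Conf f g -> mono f.
Proof. intro Cfg. exact (kernel_mono (conf_kernel Cfg)). Qed.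

Lemma conf_epi (A B D : Ob C) (f : Hom C A B) (g : Hom C B D) :
  Conf f g -> epi g.
Proof. intro Cfg. exact (cokernel_epi (conf_cokernel Cfg)). Qed.

Lemma conf_inflation (A B D : Ob C) (f : Hom C A B) (g : Hom C B D) :
  Conf f g -> inflation f.
Proof. intro Cfg. exists D, g. exact Cfg. Qed.

Lemma conf_deflation (A B D : Ob C) (f : Hom C A B) (g : Hom C B D) :
  Conf f g -> deflation g.
Proof. intro Cfg. exists A, f. exact Cfg. Qed.

Lemma deflation_epi (B D : Ob C) (g : Hom C B D) : deflation g -> epi g.
Proof. intros [A [f Cfg]]. exact (conf_epi Cfg). Qed.

Lemma conf_precomp_iso (A A' B D : Ob C) (f : Hom C A B) (g : Hom C B D)
  (u : Hom C A' A) :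
  Conf f g -> is_iso u -> Conf (f ∘ u) g.
Proof.
  intros Cfg [v [Evu Euv]].
  apply (conf_iso (u := v) (v := idm B) (w := idm D) Cfg).
  - exists u. split; assumption.
  - apply is_iso_idm.
  - apply is_iso_idm.
  - rewrite comp_id_l, <- comp_assoc, Euv, comp_id_r. reflexivity.
  - rewrite comp_id_l, comp_id_r. reflexivity.
Qed.

Lemma conf_postcomp_iso (A B D D' : Ob C) (f : Hom C A B) (g : Hom C B D)
  (w : Hom C D D') :
  Conf f g -> is_iso w -> Conf f (w ∘ g).
Proof.
  intros Cfg Iw.
  apply (conf_iso (u := idm A) (v := idm B) (w := w) Cfg);
    [apply is_iso_idm | apply is_iso_idm | exact Iw | |].
  - rewrite comp_id_l, comp_id_r. reflexivity.
  - rewrite comp_id_r. reflexivity.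
Qed.

Lemma deflation_precomp_iso (P P' X : Ob C) (p : Hom C P X) (phi : Hom C P' P) :
  deflation p -> is_iso phi -> deflation (p ∘ phi).
Proof.
  intros [A [x Cxp]] [psi [Epsi Ephi]].
  exists A, (psi ∘ x).
  apply (conf_iso (u := idm A) (v := psi) (w := idm X) Cxp).
  - apply is_iso_idm.
  - exists phi. split; assumption.
  - apply is_iso_idm.
  - rewrite comp_id_r. reflexivity.
  - rewrite comp_id_l, <- comp_assoc, Ephi, comp_id_r. reflexivity.
Qed.

Lemma conf_of_kernel (K J A B : Ob C) (j : Hom C J A) (k : Hom C K A) (h : Hom C A B) :
  Conf j h -> is_kernel k h -> Conf k h.
Proof.
  intros Cjh Hk.
  destruct (kernel_unique (conf_kernel Cjh) Hk) as [u [Eu Iu]].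
  rewrite <- Eu. exact (conf_precomp_iso Cjh Iu).
Qed.

Lemma inflation_epi_iso (A B D : Ob C) (i : Hom C A B) (c : Hom C B D) :
  Conf i c -> epi i -> is_iso i.
Proof.
  intros Cic Ei.
  assert (Ec0 : c = hzero B D).
  { apply Ei. rewrite comp_0_l. exact (conf_comp_eq0 Cic). }
  destruct (proj2 (conf_kernel Cic) B (idm B)) as [y [Ey _]].
  { rewrite Ec0. apply comp_0_l. }
  exists y. split; [|exact Ey].
  apply (conf_mono Cic). rewrite comp_assoc, Ey, comp_id_l, comp_id_r. reflexivity.
Qed.

(* Since m is mono, a lift of x ∘ pi through m vanishes on the kernel of the
   deflation pi, hence descends along pi, its cokernel. *)
Lemma is_kernel_of_local_lifts (J W R : Ob C) (m : Hom C J W) (h : Hom C W R) :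
  mono m -> h ∘ m = hzero J R ->
  (forall X (x : Hom C X W), h ∘ x = hzero X R ->
     exists X1 (pi : Hom C X1 X) (z : Hom C X1 J), deflation pi /\ m ∘ z = x ∘ pi) ->
  is_kernel m h.
Proof.
  intros Mm Ehm Lift. split; [exact Ehm|].
  intros X x Hx.
  destruct (Lift X x Hx) as [X1 [pi [z [[Z [kap Cpi]] Ez]]]].
  destruct (proj2 (conf_cokernel Cpi) J z) as [w [Ew _]].
  { apply Mm. rewrite comp_assoc, Ez, <- comp_assoc, (conf_comp_eq0 Cpi), !comp_0_r.
    reflexivity. }
  assert (Ew' : m ∘ w = x).
  { apply (conf_epi Cpi). rewrite <- comp_assoc, Ew. exact Ez. }
  exists w. split; [exact Ew'|].
  intros w' Emw'. apply Mm. rewrite Ew', Emw'. reflexivity.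
Qed.

Definition deflations_pullback_stable : Prop :=
  forall X Y Z (g : Hom C Y Z) (h : Hom C X Z), deflation g ->
    exists (P : Ob C) (p : Hom C P X) (q : Hom C P Y),
      is_pullback p q h g /\ deflation p.

Lemma deflation_exact_pullback_stable :
  deflation_exact C -> deflations_pullback_stable.
Proof. intros [_ [_ R2]]. exact R2. Qed.

Section PullbackStable.
Hypothesis HR2 : deflations_pullback_stable.

Lemma deflation_of_pullback (P X Y Z : Ob C) (p : Hom C P X) (q : Hom C P Y)
  (h : Hom C X Z) (g : Hom C Y Z) :
  is_pullback p q h g -> deflation g -> deflation p.
Proof.
  intros Hpb Dg.
  destruct (HR2 h Dg) as [P0 [p0 [q0 [Hpb0 Dp0]]]].
  destruct (pullback_unique Hpb0 Hpb) as [phi [Ephi Iphi]].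
  rewrite <- Ephi. exact (deflation_precomp_iso Dp0 Iphi).
Qed.

(* A map killed by m lifts along the deflation e after pulling e back; the
   lift lands in the kernel of m ∘ e, which e kills. *)
Lemma mono_of_deflation_factor (U J W L : Ob C) (e : Hom C U J) (m : Hom C J W)
  (k : Hom C L U) :
  deflation e -> is_kernel k (m ∘ e) -> e ∘ k = hzero L J -> mono m.
Proof.
  intros De Hk Eek. apply mono_of_comp_eq0. intros T v Hv.
  destruct (HR2 v De) as [T1 [pi [v1 [[Epb _] Dpi]]]].
  destruct (proj2 Hk T1 v1) as [z [Ez _]].
  { rewrite <- comp_assoc, <- Epb, comp_assoc, Hv. apply comp_0_l. }
  apply (deflation_epi Dpi).
  rewrite Epb, <- Ez, comp_assoc, Eek, !comp_0_l. reflexivity.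
Qed.
End PullbackStable.

Lemma deflation_of_epi (Acl : Ob C -> Prop) (HA : admissibly_deflation_percolating Acl)
  (X A : Ob C) (f : Hom C X A) :
  Acl A -> epi f -> deflation f.
Proof.
  intros AA Ef. destruct HA as [_ [_ [A2 _]]].
  destruct (A2 X A f AA) as [A' [d [i [[Z [z Czd]] [[D [c Cic]] [_ Ef_id]]]]]].
  subst f. exists Z, z. apply (conf_postcomp_iso Czd).
  exact (inflation_epi_iso Cic (epi_of_epi_comp Ef)).
Qed.
End Conflations.

Section Composite.
Variable C : ConfCat.
Variables (U V W K Q K' A' Q' : Ob C).
Variables (a : Hom C U V) (g : Hom C V Q) (f : Hom C K V) (b : Hom C V W).
Variables (k : Hom C K' K) (d : Hom C K A') (i : Hom C A' Q) (c : Hom C Q Q').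
Hypotheses (Cag : Conf a g) (Cfb : Conf f b) (Ckd : Conf k d) (Cic : Conf i c).
Hypothesis Egf : g ∘ f = i ∘ d.

Lemma composite_kernel :
  exists kU : Hom C K' U, a ∘ kU = f ∘ k /\ is_kernel kU (b ∘ a).
Proof.
  destruct (proj2 (conf_kernel Cag) K' (f ∘ k)) as [kU [EkU _]].
  { rewrite comp_assoc, Egf, <- comp_assoc, (conf_comp_eq0 Ckd). apply comp_0_r. }
  exists kU. split; [exact EkU|].
  apply (is_kernel_comp (conf_kernel Cag) (conf_kernel Cfb) (k := k)); [|exact EkU].
  rewrite Egf. exact (is_kernel_postcomp_mono (conf_kernel Ckd) (conf_mono Cic)).
Qed.

Lemma composite_cokernel :
  exists h : Hom C W Q', h ∘ b = c ∘ g /\ is_cokernel (b ∘ a) h.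
Proof.
  destruct (proj2 (conf_cokernel Cfb) Q' (c ∘ g)) as [h [Ehb _]].
  { rewrite <- comp_assoc, Egf, comp_assoc, (conf_comp_eq0 Cic). apply comp_0_l. }
  exists h. split; [exact Ehb|].
  apply (is_cokernel_comp (conf_cokernel Cag) (conf_cokernel Cfb) (c := c)); [|exact Ehb].
  rewrite Egf. exact (is_cokernel_precomp_epi (conf_cokernel Cic) (conf_epi Ckd)).
Qed.

Hypothesis HR2 : deflations_pullback_stable C.

Section Pushout.
Variables (P J : Ob C) (b' : Hom C V P) (a' : Hom C A' P) (t : Hom C P Q)
  (s : Hom C P W) (j : Hom C J P) (e : Hom C U J).
Hypotheses (Epo : b' ∘ f = a' ∘ d) (Db' : deflation b').
Hypotheses (Etb : t ∘ b' = g) (Eta : t ∘ a' = i).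
Hypotheses (Esb : s ∘ b' = b) (Esa : s ∘ a' = hzero A' W).
Hypotheses (Cjt : Conf j t) (Eje : j ∘ e = b' ∘ a).

Lemma coimage_deflation : deflation e.
Proof.
  apply (deflation_of_pullback HR2 (q := a) (h := j) (g := b')); [|exact Db'].
  apply (kernel_pullback (t := t)); [|exact (conf_kernel Cjt) | exact Eje].
  rewrite Etb. exact (conf_kernel Cag).
Qed.

Lemma coimage_comp_kernel (kU : Hom C K' U) : a ∘ kU = f ∘ k -> e ∘ kU = hzero K' J.
Proof.
  intro EkU. apply (conf_mono Cjt).
  rewrite comp_0_r, comp_assoc, Eje, <- comp_assoc, EkU, comp_assoc, Epo,
    <- comp_assoc, (conf_comp_eq0 Ckd). apply comp_0_r.
Qed.

Lemma image_mono : mono (s ∘ j).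
Proof.
  destruct composite_kernel as [kU [EkU HkU]].
  apply (mono_of_deflation_factor HR2 coimage_deflation (k := kU)).
  - rewrite <- comp_assoc, Eje, comp_assoc, Esb. exact HkU.
  - exact (coimage_comp_kernel EkU).
Qed.

Lemma image_kernel (h : Hom C W Q') : h ∘ b = c ∘ g -> is_kernel (s ∘ j) h.
Proof.
  intro Ehb.
  assert (Ehs : h ∘ s = c ∘ t).
  { apply (deflation_epi Db'). rewrite <- !comp_assoc, Esb, Etb. exact Ehb. }
  apply is_kernel_of_local_lifts; [exact image_mono | |].
  - rewrite comp_assoc, Ehs, <- comp_assoc, (conf_comp_eq0 Cjt). apply comp_0_r.
  - intros X x Hx.
    destruct (HR2 x (conf_deflation Cfb)) as [X1 [pi [x1 [[Epb _] Dpi]]]].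
    destruct (proj2 (conf_kernel Cic) X1 (g ∘ x1)) as [y [Ey _]].
    { rewrite comp_assoc, <- Ehb, <- comp_assoc, <- Epb, comp_assoc, Hx.
      apply comp_0_l. }
    destruct (proj2 (conf_kernel Cjt) X1 (hadd (b' ∘ x1) (hopp (a' ∘ y))))
      as [z [Ez _]].
    { rewrite comp_hadd_l, comp_hopp_r, !comp_assoc, Etb, Eta, Ey. apply hadd_opp. }
    exists X1, pi, z. split; [exact Dpi|].
    rewrite <- comp_assoc, Ez, comp_hadd_l, comp_hopp_r, !comp_assoc, Esb, Esa,
      comp_0_l, hopp_0, hadd_0.
    symmetry. exact Epb.
Qed.
End Pushout.

Variable Acl : Ob C -> Prop.
Hypothesis HA : admissibly_deflation_percolating Acl.
Hypotheses (AQ : Acl Q) (AA' : Acl A') (AQ' : Acl Q').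

Lemma composite_admissible : admissible (b ∘ a).
Proof.
  destruct HA as [_ [_ [_ A3]]].
  destruct (A3 K V A' f d (conf_inflation Cfb) (conf_deflation Ckd) AA')
    as [P [b' [a' [[Epo Hpo] [Db' _]]]]].
  destruct (Hpo Q g i Egf) as [t [[Etb Eta] _]].
  destruct (Hpo W b (hzero A' W)) as [s [[Esb Esa] _]].
  { rewrite (conf_comp_eq0 Cfb), comp_0_l. reflexivity. }
  assert (Dt : deflation t).
  { apply (deflation_of_epi HA AQ), (epi_of_epi_comp (f := b')).
    rewrite Etb. exact (conf_epi Cag). }
  destruct Dt as [J [j Cjt]].
  destruct (proj2 (conf_kernel Cjt) U (b' ∘ a)) as [e [Eje _]].
  { rewrite comp_assoc, Etb. exact (conf_comp_eq0 Cag). }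
  destruct composite_cokernel as [h [Ehb _]].
  assert (Dh : deflation h).
  { apply (deflation_of_epi HA AQ'), (epi_of_epi_comp (f := b)).
    rewrite Ehb. exact (epi_comp (conf_epi Cag) (conf_epi Cic)). }
  destruct Dh as [Z [z Czh]].
  exists J, e, (s ∘ j). split; [|split].
  - exact (coimage_deflation Db' Etb Cjt Eje).
  - exists Q', h. apply (conf_of_kernel Czh).
    exact (image_kernel Epo Db' Etb Eta Esb Esa Cjt Eje Ehb).
  - rewrite <- comp_assoc, Eje, comp_assoc, Esb. reflexivity.
Qed.
End Composite.

Theorem mainTheorem10 (C : ConfCat) (Acl : Ob C -> Prop)
  (HC : deflation_exact C)
  (HA : admissibly_deflation_percolating Acl)
  (U V W : Ob C) (a : Hom C U V) (b : Hom C V W)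
  (Ha : Ainv_inflation Acl a) (Hb : Ainv_deflation Acl b) :
  admissible (comp b a) /\
  (exists (K : Ob C) (k : Hom C K U), is_kernel k (comp b a) /\ Acl K) /\
  (exists (Q : Ob C) (c : Hom C W Q), is_cokernel (comp b a) c /\ Acl Q).
Proof.
  destruct Ha as [Q [g [Cag AQ]]], Hb as [K [f [Cfb AK]]].
  pose proof HA as [_ [A1 [A2 _]]].
  destruct (A2 K Q (g ∘ f) AQ)
    as [A' [d [i [[K' [k Ckd]] [[Q' [c Cic]] [AA' Egf]]]]]].
  destruct (proj1 (A1 _ _ _ _ _ Ckd) AK) as [AK' _].
  destruct (proj1 (A1 _ _ _ _ _ Cic) AQ) as [_ AQ'].
  split; [|split].
  - exact (composite_admissible Cag Cfb Ckd Cic Egf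
             (deflation_exact_pullback_stable HC) HA AQ AA' AQ').
  - destruct (composite_kernel Cag Cfb Ckd Cic Egf) as [kU [_ HkU]].
    exists K', kU. split; assumption.
  - destruct (composite_cokernel Cag Cfb Ckd Cic Egf) as [h [_ Hh]].
    exists Q', h. split; assumption.
Qed.
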